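(* Let pieces have length $a=2$. There is a bijective correspondence between pyramids of size $m\geq 1$ (with bottom piece covering $]0,2[$) and finite sequences $(p_1,p_2,\dots,p_r)$, $r\geq 1$, of pyramids such that $p_i$ is a right $0$-pyramid if $i$ is odd and a left $1$-pyramid if $i$ is even, and such that $|p_1|+\dots+|p_r|=m$.
   Context: A piece is an open interval $]s,s+a[$ of the real line with $s\in\mathbb Z$ (here $a=2$, so pieces are dimers); two pieces are concurrent iff their intervals intersect. A heap (in the sense of Viennot) is a finite configuration obtained by successively dropping pieces vertically towards the horizontal axis: each dropped piece comes to rest either on the axis or on top of the highest previously placed piece whose interval intersects its own; two dropping orders give the same heap iff they produce the same configuration. A heap is a pyramid if it has a unique bottom (minimal) piece, i.e. exactly one piece rests on the axis. The size $|p|$ is the number of pieces. A pyramid $p$ is a right $s$-pyramid if its bottom piece covers $]s,s+a[$ and is a leftmost piece of $p$ (no piece of $p$ covers $]t,t+a[$ with $t<s$). It is a left $s$-pyramid if its bottom piece covers $]s-a,s[$ and is a rightmost piece of $p$ (no piece of $p$ covers $]t-a,t[$ with $t>s$). *)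

From HB Require Import structures.
From mathcomp Require Import all_boot all_order all_algebra.
From mathcomp Require Import finmap.
Set Implicit Arguments. Unset Strict Implicit. Unset Printing Implicit Defensive.
Import Order.TTheory GRing.Theory Num.Theory.
Local Open Scope fset_scope.
Local Open Scope ring_scope.

Definition a : int := 2.

(* A piece at position s covers the open interval ]s, s+a[.  Two pieces are
   concurrent iff their open intervals intersect. *)
Definition concurrent (s t : int) : bool := (s < t + a) && (t < s + a).

(* A placed piece is a pair (position, level); level 0 = resting on the axis. *)
Definition placed := (int * nat)%type.

Definition drop_level (C : seq placed) (s : int) : nat :=
  (\max_(p <- C | concurrent p.1 s) p.2.+1)%N.

Definition drop_all (w : seq int) : seq placed :=
  foldl (fun C s => (s, drop_level C s) :: C) [::] w.

Definition heap_of (w : seq int) : {fset placed} := [fset x | x in drop_all w].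

Definition is_heap (H : {fset placed}) : Prop := exists w : seq int, heap_of w = H.

Definition hsize (H : {fset placed}) : nat := #|` H|.

(* Pyramid: a heap with exactly one piece resting on the axis
   (i.e. a unique minimal piece). *)
Definition is_pyramid (H : {fset placed}) : Prop :=
  is_heap H /\ #|` [fset x in H | x.2 == 0%N]| = 1%N.

Definition bottom_at (H : {fset placed}) (s : int) : bool := (s, 0%N) \in H.

Definition right_pyramid (s : int) (H : {fset placed}) : Prop :=
  is_pyramid H /\ bottom_at H s /\ (forall x, x \in H -> s <= x.1).

Definition left_pyramid (s : int) (H : {fset placed}) : Prop :=
  is_pyramid H /\ bottom_at H (s - a) /\ (forall x, x \in H -> x.1 + a <= s).

Definition pyr0 (m : nat) (H : {fset placed}) : Prop :=
  is_pyramid H /\ bottom_at H 0 /\ hsize H = m.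

(* Sequences (p_1,...,p_r), r >= 1, p_i right 0-pyramid for i odd, left
   1-pyramid for i even (1-indexed), with total size m.  Index i (0-based in
   nth) corresponds to p_{i+1}. *)
Definition good_seq (m : nat) (ps : seq {fset placed}) : Prop :=
  (1 <= size ps)%N /\
  (forall i : nat, (i < size ps)%N ->
     if odd i.+1 then right_pyramid 0 (nth fset0 ps i)
     else left_pyramid 1 (nth fset0 ps i)) /\
  sumn (map hsize ps) = m.

From HB Require Import structures.
From mathcomp Require Import all_boot all_order all_algebra.
From mathcomp Require Import finmap.
From mathcomp Require Import zify.
From Stdlib Require Import ClassicalEpsilon.
Set Implicit Arguments. Unset Strict Implicit. Unset Printing Implicit Defensive.
Local Open Scope fset_scope.

(* Cut a pyramid with bottom ]0,2[ at its lowest piece x lying left of the axis.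
   The piece on which x rests must cross the axis, so x covers ]-1,1[; every piece
   lying left of the axis is reachable upwards from x; hence the pieces above x form a
   left 1-pyramid, and the others form a right 0-pyramid p1 that can be dropped first,
   before the pyramid above x.  Recursing on the latter with the sides exchanged gives
   the sequence, and dropping p1, ..., pr in turn gives the inverse map.  For
   uniqueness, in any such decomposition the pieces of the upper part are exactly those
   above its first piece, which lies left of the axis; the first pieces of two
   decompositions therefore lie above each other and coincide.
   Throughout, heaps are handled through dropping words: listing the pieces of a heap
   by increasing level gives one, and whether two words build the same heap does not
   depend on the heap they are dropped onto. *)

Lemma concurrentC s t : concurrent s t = concurrent t s.
Proof. by rewrite /concurrent andbC. Qed.

Lemma concurrentxx s : concurrent s s.
Proof. rewrite /concurrent /a; apply/andP; split; lia. Qed.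

Fixpoint drops (C : seq placed) (w : seq int) : seq placed :=
  if w is s :: w' then (s, drop_level C s) :: drops ((s, drop_level C s) :: C) w'
  else [::].

Lemma drop_all_drops w : drop_all w = rev (drops [::] w).
Proof.
rewrite /drop_all -[RHS]cats0; elim: w [::] => [|s w IH] C //=.
by rewrite IH rev_cons cat_rcons.
Qed.

Lemma mem_heap_of w x : (x \in heap_of w) = (x \in drops [::] w).
Proof. by rewrite /heap_of inE drop_all_drops mem_rev. Qed.

Lemma drops_cat C u v : drops C (u ++ v) = drops C u ++ drops (rev (drops C u) ++ C) v.
Proof. by elim: u C => [|s u IH] C //=; rewrite IH rev_cons cat_rcons. Qed.

Lemma size_drops C w : size (drops C w) = size w.
Proof. by elim: w C => [|s w IH] C //=; rewrite IH. Qed.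

Lemma map_fst_drops C w : map fst (drops C w) = w.
Proof. by elim: w C => [|s w IH] C //=; rewrite IH. Qed.

Lemma nth_drops C w i d : i < size w ->
  nth d (drops C w) i =
    (nth 0%R w i, drop_level (rev (take i (drops C w)) ++ C) (nth 0%R w i)).
Proof. by elim: w C i => [|s w IH] C [|i] //= hi; rewrite IH // rev_cons cat_rcons. Qed.

Lemma drop_level_cons p C s : drop_level (p :: C) s =
  if concurrent p.1 s then maxn p.2.+1 (drop_level C s) else drop_level C s.
Proof. by rewrite /drop_level big_cons. Qed.

Lemma drop_level_perm C C' s : perm_eq C C' -> drop_level C s = drop_level C' s.
Proof. by move=> h; rewrite /drop_level (perm_big _ h). Qed.

Lemma drop_level_cat_free C L s : (forall z, z \in L -> ~~ concurrent z.1 s) ->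
  drop_level (C ++ L) s = drop_level C s.
Proof.
rewrite /drop_level big_cat /= => h.
rewrite [X in maxn _ X]big1_seq ?maxn0 // => z /andP [hc hz].
by move: (h z hz); rewrite hc.
Qed.

Lemma drop_level_gt C s z : z \in C -> concurrent z.1 s -> z.2 < drop_level C s.
Proof.
elim: C => [|p C IH] //=; rewrite inE drop_level_cons => /orP [/eqP -> ->|hz hc].
  by rewrite leq_max ltnSn.
case: ifP => _; last exact: IH.
by rewrite leq_max (IH hz hc) orbT.
Qed.

Lemma drop_level_gt0 C s : (0 < drop_level C s) = has (fun p => concurrent p.1 s) C.
Proof.
elim: C => [|p C IH] /=; first by rewrite /drop_level big_nil.
by rewrite drop_level_cons; case: ifP => //= _; rewrite leq_max.
Qed.

Lemma drop_level_support C s : 0 < drop_level C s ->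
  exists2 z, z \in C & concurrent z.1 s /\ z.2.+1 = drop_level C s.
Proof.
elim: C => [|p C IH] /=; first by rewrite /drop_level big_nil.
rewrite drop_level_cons; case: ifP => hc.
  case: (leqP (drop_level C s) p.2.+1) => hm.
    by move=> _; exists p; rewrite ?mem_head ?(maxn_idPl hm).
  have [z hz [h1 h2]] := IH (leq_ltn_trans (leq0n _) hm).
  by exists z; rewrite ?inE ?hz ?orbT // h2 (maxn_idPr (ltnW hm)).
by move/IH => [z hz hh]; exists z; rewrite // inE hz orbT.
Qed.

Definition precedes (x y : placed) : bool := concurrent x.1 y.1 ==> (x.2 < y.2).

Lemma precedes_irr x : precedes x x = false.
Proof. by rewrite /precedes concurrentxx ltnn. Qed.

Lemma pairwise_precedes_uniq s : pairwise precedes s -> uniq s.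
Proof.
move=> h; rewrite uniq_pairwise; apply: sub_pairwise h => x y hr.
by apply/eqP=> e; move: hr; rewrite e precedes_irr.
Qed.

Lemma pairwise_memP (T : eqType) (r : rel T) s x y : pairwise r s ->
  x \in s -> y \in s -> x != y -> r x y || r y x.
Proof.
elim: s => [|z s IH] //=; rewrite !inE => /andP [/allP ha hp].
move=> /orP [/eqP ->|hx] /orP [/eqP ->|hy] hne.
- by rewrite eqxx in hne.
- by rewrite ha.
- by rewrite ha ?orbT.
- exact: IH.
Qed.

Lemma pairwise_precedes_level s x y : pairwise precedes s -> x \in s -> y \in s ->
  x != y -> concurrent x.1 y.1 -> x.2 != y.2.
Proof.
move=> hp hx hy hne hc; have := pairwise_memP hp hx hy hne.
rewrite /precedes hc concurrentC hc /= => /orP [] h;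
  by apply/eqP => e; move: h; rewrite e ltnn.
Qed.

Definition settled (C T : seq placed) : Prop :=
  forall y, y \in T -> (forall z, z \in C -> concurrent z.1 y.1 -> z.2 < y.2) /\
    y.2 = drop_level (C ++ [seq z <- T | z.2 < y.2]) y.1.

Lemma settled_perm C T T' : perm_eq T T' -> settled C T -> settled C T'.
Proof.
move=> hp hv y; rewrite -(perm_mem hp) => /hv [h1 h2]; split=> //.
by rewrite {1}h2; apply: drop_level_perm; rewrite perm_cat2l; apply: perm_filter.
Qed.

Lemma drop_level_shift p C L y : precedes p y ->
  drop_level ((p :: C) ++ [seq z <- L | z.2 < y.2]) y.1 =
  drop_level (C ++ [seq z <- p :: L | z.2 < y.2]) y.1.
Proof.
move=> hr /=; case: ifP => hl; first by apply: drop_level_perm; rewrite -cat1s perm_catCA.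
by rewrite drop_level_cons; case: ifP => // hc; move: hr; rewrite /precedes hc hl.
Qed.

Lemma drop_level_head t C L : all (precedes t) L ->
  drop_level (C ++ [seq z <- L | z.2 < t.2]) t.1 = drop_level C t.1.
Proof.
move=> /allP hall; apply: drop_level_cat_free => z; rewrite mem_filter => /andP [hz hy].
apply/negP=> hc; move: (hall z hy); rewrite /precedes concurrentC hc /=.
by move=> /(ltn_trans hz); rewrite ltnn.
Qed.

Lemma drops_settled C w : settled C (drops C w).
Proof.
elim: w C => [|s w IH] C //=; set p := (s, drop_level C s).
have hv := IH (p :: C).
have hall y : y \in drops (p :: C) w -> precedes p y.
  by move=> hy; apply/implyP => hc; exact: (hv y hy).1 p (mem_head _ _) hc.
move=> y; rewrite inE => /orP [/eqP ->|hy].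
  split; first by move=> z hz hc; exact: drop_level_gt.
  by rewrite /= ltnn (drop_level_head (t := p)) //; apply/allP.
have [h1 h2] := hv y hy; split; first by move=> z hz; apply: h1; rewrite inE hz orbT.
by rewrite {1}h2 drop_level_shift // hall.
Qed.

Lemma pairwise_precedes_drops C w : pairwise precedes (drops C w).
Proof.
elim: w C => [|s w IH] C //=; rewrite IH andbT; apply/allP => y hy.
have [below _] := drops_settled hy.
by apply/implyP => hc; exact: below _ (mem_head _ _) hc.
Qed.

Lemma drops_of_settled C T : settled C T -> pairwise precedes T -> drops C (map fst T) = T.
Proof.
elim: T C => [|t T IH] C //= hv /andP [hall hp].
have [_ ht] := hv t (mem_head _ _).
rewrite /= ltnn drop_level_head // in ht.
rewrite -ht -surjective_pairing IH // => y hy.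
have [h1 h2] := hv y (@mem_behead _ (t :: T) _ hy); split.
  move=> z; rewrite inE => /orP [/eqP -> hc|]; last exact: h1.
  by move/allP: hall => /(_ y hy); rewrite /precedes hc.
by rewrite {1}h2 -drop_level_shift //; exact: (allP hall y hy).
Qed.

Lemma map_nth_index (T : eqType) (A B : seq T) : uniq A -> size A = size B ->
  map (fun x => nth x B (index x A)) A = B.
Proof.
case: A => [|x0 A'] uA sAB; first by case: B sAB.
apply: (@eq_from_nth _ x0); rewrite ?size_map // => i hi.
by rewrite (nth_map x0) // index_uniq //; apply: set_nth_default; rewrite -sAB.
Qed.

Lemma drops_precedes_rebase C1 C2 w i j d : i < size w -> j < size w ->
  precedes (nth d (drops C1 w) i) (nth d (drops C1 w) j) ->
  precedes (nth d (drops C2 w) i) (nth d (drops C2 w) j).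
Proof.
have fstE C k : k < size w -> (nth d (drops C w) k).1 = nth 0%R w k.
  by move=> hk; rewrite nth_drops.
move=> hi hj; rewrite /precedes !fstE //.
have [hc|] := boolP (concurrent _ _) => //= hlt; apply/negPn/negP => hge.
have pw C := pairwiseP d (pairwise_precedes_drops C w).
have [ltij|ltji|eij] := ltngtP i j.
- by case/negP: hge; move: (pw C2 i j); rewrite !inE size_drops => /(_ hi hj ltij);
    rewrite /precedes !fstE // hc.
- by move: (pw C1 j i); rewrite !inE size_drops => /(_ hj hi ltji);
    rewrite /precedes !fstE // concurrentC hc /= => /(ltn_trans hlt); rewrite ltnn.
- by move: hlt; rewrite eij ltnn.
Qed.

Lemma drops_rebase C1 C2 v1 v2 : drops C1 v1 =i drops C1 v2 -> drops C2 v1 =i drops C2 v2.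
Proof.
move=> eqA.
set A1 := drops C1 v1; set A2 := drops C1 v2; set B1 := drops C2 v1.
have uA1 : uniq A1 by apply/pairwise_precedes_uniq/pairwise_precedes_drops.
have uA2 : uniq A2 by apply/pairwise_precedes_uniq/pairwise_precedes_drops.
have pA : perm_eq A2 A1 by apply: uniq_perm => // x; rewrite eqA.
(* Rebase the pieces of [A2] position-wise along [v1]: this rearranges [B1] into a
   settled precedence-ordered sequence with positions [v2], which must be [drops C2 v2]. *)
pose phi x := nth x B1 (index x A1).
have phiA1 : map phi A1 = B1 by apply: map_nth_index; rewrite // !size_drops.
have phi_fst : {in A1, forall x, (phi x).1 = x.1}.
  move=> x hx; have hi : index x A1 < size v1 by rewrite -(size_drops C1) index_mem.
  rewrite /phi (set_nth_default (0%R, 0%N)) ?size_drops // nth_drops //.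
  by rewrite -[in RHS](nth_index (0%R, 0%N) hx) nth_drops.
have phi_precedes : {in A1 &, forall x y, precedes x y -> precedes (phi x) (phi y)}.
  move=> x y hx hy.
  have idx z : z \in A1 -> index z A1 < size v1 by rewrite -(size_drops C1) index_mem.
  have := drops_precedes_rebase (C1 := C1) C2 (d := (0%R, 0%N)) (idx x hx) (idx y hy).
  by rewrite !nth_index // /phi !(set_nth_default (0%R, 0%N)) ?size_drops ?idx.
set T := map phi A2.
have pT : perm_eq T B1 by rewrite -phiA1 perm_map.
have fstT : map fst T = v2.
  rewrite -map_comp -[RHS](map_fst_drops C1); apply/eq_in_map => x hx /=.
  by apply: phi_fst; rewrite eqA.
have precT : pairwise precedes T.
  rewrite pairwise_map; apply: (sub_in_pairwise phi_precedes).
    by apply/allP => x; rewrite (perm_mem pA).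
  exact: pairwise_precedes_drops.
have eT : drops C2 v2 = T.
  rewrite -fstT drops_of_settled //.
  by apply: settled_perm (@drops_settled C2 v1); rewrite perm_sym.
by move=> x; rewrite eT (perm_mem pT).
Qed.

Lemma heap_of_cat2l u v1 v2 : heap_of v1 = heap_of v2 -> heap_of (u ++ v1) = heap_of (u ++ v2).
Proof.
move=> e; have e' : drops [::] v1 =i drops [::] v2 by move=> y; rewrite -!mem_heap_of e.
have := drops_rebase (rev (drops [::] u) ++ [::]) e' => e2.
by apply/fsetP => y; rewrite !mem_heap_of !drops_cat !mem_cat e2.
Qed.

Lemma hsize_heap_of w : hsize (heap_of w) = size w.
Proof.
rewrite /hsize /heap_of card_imfset //= drop_all_drops undup_id ?size_rev ?size_drops //.
by rewrite rev_uniq; apply/pairwise_precedes_uniq/pairwise_precedes_drops.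
Qed.

Section HeapFacts.
Variables (H : {fset placed}) (w : seq int).
Hypothesis heapH : heap_of w = H.

Lemma heap_levels_neq y z : y \in H -> z \in H -> y != z -> concurrent y.1 z.1 -> y.2 != z.2.
Proof.
by rewrite -heapH !mem_heap_of; apply/pairwise_precedes_level/pairwise_precedes_drops.
Qed.

Lemma heap_support y : y \in H -> 0 < y.2 ->
  exists2 z, z \in H & concurrent z.1 y.1 /\ z.2 < y.2.
Proof.
rewrite -heapH mem_heap_of => hy; have [_ ylevel] := drops_settled hy.
rewrite {1}ylevel => /drop_level_support [z]; rewrite mem_filter => /andP [lt_zy hz] [hc _].
by exists z; rewrite ?mem_heap_of.
Qed.

End HeapFacts.

Definition by_level (x y : placed) : bool := x.2 <= y.2.

Lemma by_level_trans : transitive by_level.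
Proof. by move=> y x z; apply: leq_trans. Qed.

Definition canon (H : {fset placed}) : seq int := map fst (sort by_level (enum_fset H)).

Lemma sort_by_level_sorted s : sorted by_level (sort by_level s).
Proof. by apply: sort_sorted => x y; apply: leq_total. Qed.

Lemma pairwise_precedes_sort s : uniq s ->
  {in s &, forall x y, x != y -> concurrent x.1 y.1 -> x.2 != y.2} ->
  pairwise precedes (sort by_level s).
Proof.
move=> us neq_levels.
have ps : pairwise (fun x y => by_level x y && (x != y)) (sort by_level s).
  rewrite pairwise_relI -uniq_pairwise sort_uniq us andbT -sorted_pairwise.
    exact: sort_by_level_sorted.
  exact: by_level_trans.
apply: (@sub_in_pairwise _ (mem s) _ _ _ _ _ ps); last by apply/allP => x; rewrite mem_sort.
move=> x y hx hy /andP [le_xy neq_xy]; apply/implyP => hc.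
by rewrite ltn_neqAle (neq_levels x y).
Qed.

Lemma drops_canon H : is_heap H -> drops [::] (canon H) = sort by_level (enum_fset H).
Proof.
move=> [w heapH].
have mem_wH x : (x \in drops [::] w) = (x \in H) by rewrite -heapH mem_heap_of.
apply: drops_of_settled; last first.
  apply: pairwise_precedes_sort; first exact: fset_uniq.
  by move=> y z hy hz; apply: (heap_levels_neq heapH hy hz).
apply: settled_perm (@drops_settled [::] w).
apply: uniq_perm; rewrite ?sort_uniq ?fset_uniq //.
  by apply/pairwise_precedes_uniq/pairwise_precedes_drops.
by move=> x; rewrite mem_sort mem_wH.
Qed.

Lemma heap_of_canon H : is_heap H -> heap_of (canon H) = H.
Proof. by move=> hH; apply/fsetP => x; rewrite mem_heap_of drops_canon // mem_sort. Qed.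

Lemma size_canon H : size (canon H) = #|` H|.
Proof. by rewrite /canon size_map size_sort. Qed.

Lemma card_ground1P (H : {fset placed}) c : (c, 0) \in H ->
  reflect (forall x, x \in H -> x.2 = 0 -> x = (c, 0)) (#|` [fset x in H | x.2 == 0]| == 1).
Proof.
move=> hc; apply: (iffP idP).
  move/cardfs1P => [y hy] x hx x0.
  have inG z : z \in H -> z.2 = 0 -> z \in [fset x in H | x.2 == 0] by rewrite !inE => -> ->.
  by move: (inG x hx x0) (inG _ hc erefl); rewrite hy !inE => /eqP -> /eqP ->.
move=> h; apply/cardfs1P; exists (c, 0); apply/fsetP => x; rewrite !inE.
by apply/andP/eqP => [[hx /eqP]|->]; [exact: h|rewrite hc].
Qed.

Lemma drops_level_gt0 w i d : i < size w ->
  (0 < (nth d (drops [::] w) i).2) = has (concurrent^~ (nth 0%R w i)) (take i w).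
Proof.
move=> hi; rewrite nth_drops //= cats0 drop_level_gt0 has_rev.
have -> : take i w = map fst (take i (drops [::] w)) by rewrite map_take map_fst_drops.
by rewrite has_map.
Qed.

Definition pyramid_word (c : int) (w : seq int) : Prop :=
  is_pyramid (heap_of w) /\ bottom_at (heap_of w) c.

Lemma pyramid_wordP w c :
  pyramid_word c w <->
  [/\ 0 < size w, nth 0%R w 0 = c &
      forall i, 0 < i < size w -> has (concurrent^~ (nth 0%R w i)) (take i w)].
Proof.
set L := drops [::] w; pose d : placed := (0%R, 0%N).
have uL : uniq L by apply/pairwise_precedes_uniq/pairwise_precedes_drops.
have sL : size L = size w by rewrite size_drops.
have nth0 : 0 < size w -> nth d L 0 = (nth 0%R w 0, 0).
  by move=> hw; rewrite nth_drops //= take0 /drop_level big_nil.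
have mem_nthL i : i < size w -> nth d L i \in heap_of w.
  by move=> hi; rewrite mem_heap_of mem_nth ?sL.
split.
  move=> [[_ ground1] hb]; move/eqP/(card_ground1P hb): ground1 => ground1.
  have hw : 0 < size w by move: hb; rewrite /bottom_at mem_heap_of -/L -sL; case: (L).
  have L0 : nth d L 0 = (c, 0) by apply: ground1; [exact: mem_nthL|rewrite nth0].
  split=> //; first by move: L0; rewrite nth0 // => -[].
  move=> i /andP [i_gt0 hi]; apply: contraTT i_gt0 => no_support.
  have Li : nth d L i = nth d L 0.
    rewrite L0; apply: ground1; first exact: mem_nthL.
    by apply/eqP; rewrite eqn0Ngt drops_level_gt0 // (negbTE no_support).
  by move/eqP: Li; rewrite nth_uniq ?sL // => /eqP ->.
move=> [hw w0 support]; have L0 : nth d L 0 = (c, 0) by rewrite nth0 ?w0.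
have hb : bottom_at (heap_of w) c by rewrite /bottom_at -L0 mem_nthL.
split=> //; split; first by exists w.
apply/eqP/(card_ground1P hb) => y; rewrite mem_heap_of => /(nthP d) [i hi <-].
rewrite sL in hi; case: i hi => [|i] hi // lvl0.
by move: (support i.+1 hi); rewrite -(drops_level_gt0 d) // lvl0.
Qed.

(* Side [true] is the half-line of positions [>= 0], side [false] that of positions
   [<= -1]; a right 0-pyramid is based at [0], a left 1-pyramid at [-1], and these
   two bases are the only concurrent pair of pieces on opposite sides. *)
Definition on_side (b : bool) (t : int) : bool := if b then (0 <= t)%R else (t <= -1)%R.
Definition base_pos (b : bool) : int := if b then 0%R else (-1)%R.

Lemma on_side_base b : on_side b (base_pos b).
Proof. by case: b. Qed.

Lemma on_sideN b t : on_side (~~ b) t = ~~ on_side b t.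
Proof. by case: b; rewrite /on_side /=; apply/idP/idP; lia. Qed.

Lemma concurrent_bases b : concurrent (base_pos b) (base_pos (~~ b)).
Proof. by case: b. Qed.

Lemma concurrent_across b s t : on_side b s -> ~~ on_side b t -> concurrent s t ->
  s = base_pos b /\ t = base_pos (~~ b).
Proof. by case: b; rewrite /on_side /base_pos /concurrent /a /= => ? ? /andP [? ?]; lia. Qed.

Definition side_pyramid (b : bool) (P : {fset placed}) : Prop :=
  [/\ is_pyramid P, bottom_at P (base_pos b) & forall x, x \in P -> on_side b x.1].

Definition based_pyramid (b : bool) (m : nat) (H : {fset placed}) : Prop :=
  [/\ is_pyramid H, bottom_at H (base_pos b) & hsize H = m].

Inductive above (H : {fset placed}) (x : placed) : placed -> Prop :=
| above_refl : above H x x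
| above_step y z : above H x y -> z \in H -> concurrent y.1 z.1 -> y.2 < z.2 -> above H x z.

Lemma above_level H x y : above H x y -> y = x \/ x.2 < y.2.
Proof.
elim => [|y' z _ [->|h] _ _ hl]; [by left|by right|right]; exact: ltn_trans hl.
Qed.

Lemma above_mem H x y : x \in H -> above H x y -> y \in H.
Proof. by move=> hx; case. Qed.

Lemma above_inv H x z : above H x z -> z = x \/
  exists y, [/\ above H x y, concurrent y.1 z.1 & y.2 < z.2].
Proof. by case => [|y z' h1 _ h3 h4]; [left|right; exists y]. Qed.

Definition upper_part (P : {fset placed}) (w : seq int) : seq placed :=
  drops (rev (sort by_level (enum_fset P))) w.

Section Glue.
Variables (b : bool) (P : {fset placed}) (w : seq int).
Hypothesis sideP : side_pyramid b P.
Hypothesis pyr_w : pyramid_word (base_pos (~~ b)) w.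

Let H := heap_of (canon P ++ w).
Let TP := sort by_level (enum_fset P).
Let Q := upper_part P w.
Let x := nth (0%R, 0%N) Q 0.
Let word_w := (pyramid_wordP w (base_pos (~~ b))).1 pyr_w.

Lemma drops_glue : drops [::] (canon P ++ w) = TP ++ Q.
Proof. by case: sideP => [[hP _] _ _]; rewrite drops_cat drops_canon // cats0. Qed.

Lemma mem_glue y : (y \in H) = (y \in P) || (y \in Q).
Proof. by rewrite mem_heap_of drops_glue mem_cat mem_sort. Qed.

Lemma mem_glue_upper y : (y \in Q) = (y \in H) && (y \notin P).
Proof.
have := pairwise_precedes_uniq (pairwise_precedes_drops [::] (canon P ++ w)).
rewrite drops_glue cat_uniq => /and3P [_ /hasPn disj _].
rewrite mem_glue; case yQ: (y \in Q); last by rewrite orbF andbN.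
by rewrite orbT -(mem_sort by_level) (negbTE (disj y yQ)).
Qed.

Lemma mem_glue_lower y : (y \in P) = (y \in H) && (y \notin Q).
Proof. by have := mem_glue_upper y; rewrite mem_glue; case: (y \in P); case: (y \in Q). Qed.

Lemma glue_based_pyramid : based_pyramid b (#|` P| + size w) H.
Proof.
case: sideP => pyrP botP _; case: word_w => ws0 w0 wSupport.
have [hP _] := pyrP.
have /pyramid_wordP [uP uP0 uSupport] : pyramid_word (base_pos b) (canon P).
  by rewrite /pyramid_word heap_of_canon.
set u := canon P in uP uP0 uSupport.
have [pyrH botH] : pyramid_word (base_pos b) (canon P ++ w).
  apply/pyramid_wordP; split; rewrite ?size_cat ?nth_cat ?uP ?addn_gt0 ?uP //.
  move=> i /andP [i_gt0 hi]; rewrite nth_cat take_cat.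
  case: ltnP => [iu|ui]; first by apply: uSupport; rewrite i_gt0.
  rewrite has_cat; case: (posnP (i - size u)) => [->|j_gt0].
    rewrite w0 take0 orbF; apply/hasP; exists (nth 0%R u 0); first by rewrite mem_nth.
    by rewrite uP0 concurrent_bases.
  by rewrite wSupport ?orbT // j_gt0 ltn_subLR // addnC -size_cat.
by split=> //; rewrite hsize_heap_of size_cat size_canon.
Qed.

Lemma glue_head : x \in H /\ ~~ on_side b x.1.
Proof.
case: word_w => ws0 w0 _; split; first by rewrite mem_glue /x mem_nth ?orbT ?size_drops.
by rewrite /x nth_drops //= w0 -on_sideN on_side_base.
Qed.

Lemma above_glue_head y : above H x y <-> y \in Q.
Proof.
have := pairwise_precedes_drops [::] (canon P ++ w).
rewrite drops_glue pairwise_cat => /and3P [/allrelP PQ _ _].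
split.
  have [ws0 _ _] := word_w.
  elim=> [|y' z _ y'Q zH conc lt]; first by rewrite /x mem_nth ?size_drops.
  rewrite mem_glue_upper zH /=; apply/negP => zP.
  have zTP : z \in TP by rewrite mem_sort.
  move: (PQ z y' zTP y'Q).
  by rewrite /precedes concurrentC conc /= => /(ltn_trans lt); rewrite ltnn.
have [_ _ wSupport] := word_w.
move/(nthP (0%R, 0%N)) => [i hi <-]; rewrite size_drops in hi.
elim/ltn_ind: i hi => -[_ _|i IH hi]; first exact: above_refl.
have /hasP [t /(nthP 0%R) [j]] := wSupport i.+1 hi.
rewrite size_take hi => j_lt_i; rewrite nth_take // => <- conc.
have hj : j < size w by apply: ltn_trans hi.
apply: (above_step (y := nth (0%R, 0%N) Q j)); first exact: IH.
- by rewrite mem_glue mem_nth ?orbT ?size_drops.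
- by rewrite !nth_drops.
- have /(pairwiseP (0%R, 0%N)) pwQ := pairwise_precedes_drops (rev TP) w.
  move: (pwQ j i.+1); rewrite !inE size_drops => /(_ hj hi j_lt_i).
  by rewrite /precedes !nth_drops // conc.
Qed.

End Glue.

Lemma above_antisym H x y : above H x y -> above H y x -> x = y.
Proof.
move=> /above_level [->//|lt_xy] /above_level [->//|lt_yx].
by move: (ltn_trans lt_xy lt_yx); rewrite ltnn.
Qed.

Lemma glue_inj b P1 P2 w1 w2 : side_pyramid b P1 -> side_pyramid b P2 ->
  pyramid_word (base_pos (~~ b)) w1 ->
  pyramid_word (base_pos (~~ b)) w2 ->
  heap_of (canon P1 ++ w1) = heap_of (canon P2 ++ w2) -> P1 = P2 /\ heap_of w1 = heap_of w2.
Proof.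
move=> side1 side2 pyr1 pyr2 eH.
have notin_side P : side_pyramid b P -> forall y, ~~ on_side b y.1 -> y \notin P.
  by case=> _ _ onP y off; apply: contra off; apply: onP.
have [x1H x1_off] := glue_head side1 pyr1; have [x2H x2_off] := glue_head side2 pyr2.
have Q1E := above_glue_head side1 pyr1; have Q2E := above_glue_head side2 pyr2.
rewrite eH in x1H Q1E.
have ex : nth (0%R, 0%N) (upper_part P1 w1) 0 = nth (0%R, 0%N) (upper_part P2 w2) 0.
  apply: above_antisym; [apply/Q1E|apply/Q2E].
    by rewrite (mem_glue_upper w1 side1) eH x2H notin_side.
  by rewrite (mem_glue_upper w2 side2) x1H notin_side.
have eQ : upper_part P1 w1 =i upper_part P2 w2.
  move=> y; apply/idP/idP => hy; first by apply/Q2E; rewrite -ex; apply/Q1E.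
  by apply/Q1E; rewrite ex; apply/Q2E.
have eP : P1 = P2.
  by apply/fsetP => y; rewrite (mem_glue_lower w1 side1) (mem_glue_lower w2 side2) eH eQ.
split=> //; move: eQ; rewrite /upper_part eP => /(drops_rebase [::]) eQ.
by apply/fsetP => y; rewrite !mem_heap_of eQ.
Qed.

Definition asbool (P : Prop) : bool := if excluded_middle_informative P then true else false.

Lemma asboolP (P : Prop) : reflect P (asbool P).
Proof. by rewrite /asbool; case: excluded_middle_informative => h; constructor. Qed.

Definition above_set (H : {fset placed}) (x : placed) : {fset placed} :=
  [fset y in H | asbool (above H x y)].

Lemma mem_above_set H x y : (y \in above_set H x) = (y \in H) && asbool (above H x y).
Proof. by rewrite !inE. Qed.

Section Split.
Variables (b : bool) (H : {fset placed}) (w0 : seq int) (x : placed).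
Hypothesis heapH : heap_of w0 = H.
Hypothesis botH : (base_pos b, 0%N) \in H.
Hypothesis groundH : forall y, y \in H -> y.2 = 0%N -> y = (base_pos b, 0%N).
Hypothesis xH : x \in H.
Hypothesis x_off : ~~ on_side b x.1.
Hypothesis x_min : forall y, y \in H -> ~~ on_side b y.1 -> x.2 <= y.2.

Lemma lowest_off_side_gt0 : 0 < x.2.
Proof.
rewrite lt0n; apply/negP => /eqP x0.
by move: x_off; rewrite (groundH xH x0) on_side_base.
Qed.

Lemma lowest_off_side_base : x.1 = base_pos (~~ b).
Proof.
have [z zH [conc lt_zx]] := heap_support heapH xH lowest_off_side_gt0.
case z_on: (on_side b z.1); first by case: (concurrent_across z_on x_off conc).
by move: (x_min zH (negbT z_on)); rewrite leqNgt lt_zx.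
Qed.

(* Induction on the level: an off-side piece not at the base rests on an off-side piece. *)
Lemma above_lowest_off_side y : y \in H -> ~~ on_side b y.1 -> above H x y.
Proof.
elim/ltn_ind: {y}y.2 {-2}y (erefl y.2) => n IH y yn yH y_off.
have [->|neq_yx] := eqVneq y x; first exact: above_refl.
have le_xy := x_min yH y_off.
have [y_base|y_nbase] := eqVneq y.1 (base_pos (~~ b)).
  have conc : concurrent x.1 y.1 by rewrite lowest_off_side_base y_base concurrentxx.
  apply: (above_step (above_refl _ _) yH conc).
  by rewrite ltn_neqAle le_xy andbT (heap_levels_neq heapH xH yH) // eq_sym.
have [z zH [conc lt_zy]] := heap_support heapH yH (leq_trans lowest_off_side_gt0 le_xy).
case z_on: (on_side b z.1).
  by case: (concurrent_across z_on y_off conc) => _ /eqP; rewrite (negbTE y_nbase).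
by apply: (above_step (IH z.2 _ z erefl zH _) yH conc lt_zy); rewrite -?yn ?z_on.
Qed.

Let upper := above_set H x.
Let lower := H `\` above_set H x.
Let TL := sort by_level (enum_fset lower).
Let TU := sort by_level (enum_fset upper).

Lemma mem_lower y : (y \in lower) = (y \in H) && ~~ asbool (above H x y).
Proof. by rewrite in_fsetD mem_above_set; case: (y \in H); rewrite ?andbT ?andbF. Qed.

Lemma drops_split : drops [::] (canon lower ++ canon upper) = TL ++ TU.
Proof.
have sub_levels (S : {fset placed}) :
    {subset S <= H} -> pairwise precedes (sort by_level (enum_fset S)).
  move=> SH; apply: pairwise_precedes_sort; first exact: fset_uniq.
  by move=> y z /SH yH /SH zH; apply: (heap_levels_neq heapH yH zH).
have lowerH : {subset lower <= H} by move=> y; rewrite mem_lower => /andP [].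
have upperH : {subset upper <= H} by move=> y; rewrite mem_above_set => /andP [].
have across : allrel precedes TL TU.
  apply/allrelP => p u; rewrite !mem_sort mem_lower mem_above_set.
  move=> /andP [pH /asboolP p_nabove] /andP [uH /asboolP u_above].
  apply/implyP => conc; have neq_pu : p != u by apply/eqP => pu; apply: p_nabove; rewrite pu.
  case: (ltngtP p.2 u.2) => // [lt_up|eq_pu].
    by case: p_nabove; apply: above_step u_above pH _ lt_up; rewrite concurrentC.
  by move: (heap_levels_neq heapH pH uH neq_pu conc); rewrite eq_pu eqxx.
have prec : pairwise precedes (TL ++ TU) by rewrite pairwise_cat across !sub_levels.
rewrite /canon -map_cat drops_of_settled //.
apply: settled_perm (@drops_settled [::] w0).
apply: uniq_perm; [exact/pairwise_precedes_uniq/pairwise_precedes_drops|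
                   exact: pairwise_precedes_uniq|].
move=> y; rewrite -mem_heap_of heapH mem_cat !mem_sort mem_lower mem_above_set.
by case: (y \in H); case: asbool.
Qed.

Lemma heap_of_split : heap_of (canon lower ++ canon upper) = H.
Proof.
apply/fsetP => y; rewrite mem_heap_of drops_split mem_cat !mem_sort mem_lower mem_above_set.
by case: (y \in H); case: asbool.
Qed.

Lemma lower_side_pyramid : side_pyramid b lower.
Proof.
have botL : bottom_at lower (base_pos b).
  rewrite /bottom_at mem_lower botH; apply/asboolP => /above_level [bx|].
    by move: x_off; rewrite -bx on_side_base.
  by rewrite ltn0.
split=> //; last first.
  move=> y; rewrite mem_lower => /andP [yH /asboolP y_nabove].
  by apply/negPn/negP => y_off; apply: y_nabove; apply: above_lowest_off_side.
split.
  exists (canon lower); apply/fsetP => y; rewrite mem_heap_of.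
  have := drops_split; rewrite drops_cat => /eqP; rewrite eqseq_cat ?size_drops ?size_map //.
  by case/andP => /eqP -> _; rewrite mem_sort.
by apply/eqP/(card_ground1P botL) => y; rewrite mem_lower => /andP [/groundH].
Qed.

Lemma upper_pyramid :
  pyramid_word (base_pos (~~ b)) (canon upper).
Proof.
pose d : placed := (0%R, 0%N).
have xU : x \in TU by rewrite mem_sort mem_above_set xH; apply/asboolP/above_refl.
have sU : 0 < size TU by case: (TU) xU.
have /(pairwiseP d) sortedU : pairwise by_level TU.
  by rewrite -sorted_pairwise ?sort_by_level_sorted //; apply: by_level_trans.
have uU : uniq TU by rewrite sort_uniq fset_uniq.
have U0 : nth d TU 0 = x.
  have : nth d TU 0 \in upper by rewrite -(mem_sort by_level) mem_nth.
  rewrite mem_above_set => /andP [_ /asboolP /above_level [//|lt_xU0]].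
  have [j hj xj] := nthP d xU; case: j hj xj => [|j] hj xj; first by rewrite xj.
  by move: (sortedU 0 j.+1 sU hj isT); rewrite /by_level xj leqNgt lt_xU0.
have nthw i : i < size TU -> nth 0%R (canon upper) i = (nth d TU i).1.
  by move=> hi; rewrite /canon (nth_map d).
apply/pyramid_wordP; split; rewrite ?size_map ?nthw ?U0 ?lowest_off_side_base //.
move=> i /andP [i_gt0 hi]; rewrite nthw //.
have uU_i : nth d TU i \in upper by rewrite -(mem_sort by_level) mem_nth.
have neq_x : nth d TU i != x by rewrite -U0 nth_uniq // -lt0n.
move: uU_i; rewrite mem_above_set => /andP [_ /asboolP /above_inv].
case=> [/eqP|[y [y_above conc lt_y]]].
  by rewrite (negbTE neq_x).
have yU : y \in TU by rewrite mem_sort mem_above_set (above_mem xH y_above); apply/asboolP.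
have [j hj yj] := nthP d yU.
have lt_ji : j < i.
  rewrite ltnNge leq_eqVlt; apply/negP => /orP [/eqP ij|lt_ij].
    by move: lt_y; rewrite -yj ij ltnn.
  by move: (sortedU i j hi hj lt_ij); rewrite /by_level yj leqNgt lt_y.
apply/hasP; exists (nth 0%R (canon upper) j); last by rewrite nthw // yj.
by rewrite -(nth_take _ lt_ji) mem_nth // size_take size_map hi.
Qed.

End Split.

Lemma based_pyramid_split b m H :
  based_pyramid b m H -> (exists2 y, y \in H & ~~ on_side b y.1) ->
  exists P w, [/\ side_pyramid b P,
                  pyramid_word (base_pos (~~ b)) w,
                  (#|` P| + size w)%N = m & heap_of (canon P ++ w) = H].
Proof.
case=> [[[w0 heapH] /eqP ground1] botH sizeH] [y0 y0H y0_off].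
move/(card_ground1P botH): ground1 => groundH.
have off_level : exists n, has (fun y => ~~ on_side b y.1 && (y.2 == n)) (enum_fset H).
  by exists y0.2; apply/hasP; exists y0; rewrite // y0_off eqxx.
case: (ex_minnP off_level) => n /hasP [x xH /andP [x_off /eqP xn]] n_min.
have x_min y : y \in H -> ~~ on_side b y.1 -> x.2 <= y.2.
  by move=> yH y_off; rewrite xn n_min //; apply/hasP; exists y; rewrite // y_off eqxx.
exists (H `\` above_set H x), (canon (above_set H x)); split.
- exact: lower_side_pyramid heapH botH groundH xH x_off x_min.
- exact: upper_pyramid heapH groundH xH x_off x_min.
- by rewrite -size_canon -size_cat -hsize_heap_of (heap_of_split x heapH).
- exact: heap_of_split x heapH.
Qed.

Definition alternating (b : bool) (ps : seq {fset placed}) : Prop :=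
  forall i, i < size ps -> side_pyramid (b (+) odd i) (nth fset0 ps i).

Lemma alternating_cons b p ps :
  alternating b (p :: ps) <-> side_pyramid b p /\ alternating (~~ b) ps.
Proof.
split=> [alt|[sp alt] [|i] hi] /=; last 2 first.
- by rewrite addbF.
- by rewrite addbN -addNb; apply: alt.
split; first by move: (alt 0 isT); rewrite addbF.
by move=> i hi; move: (alt i.+1 hi); rewrite /= addbN -addNb.
Qed.

Definition stack_word (ps : seq {fset placed}) : seq int := flatten (map canon ps).

Lemma side_pyramid_heap b P : side_pyramid b P -> heap_of (canon P) = P.
Proof. by case=> [[hP _] _ _]; apply: heap_of_canon. Qed.

Lemma alternating_based_pyramid b ps : ps != [::] -> alternating b ps ->
  based_pyramid b (sumn (map hsize ps)) (heap_of (stack_word ps)).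
Proof.
elim: ps b => [|p ps IH] b // _ /alternating_cons [sp alt].
case: ps => [|q ps] in IH alt *.
  by rewrite /stack_word /= cats0 addn0 (side_pyramid_heap sp); case: sp.
have [pyr bot sz] := IH (~~ b) isT alt; rewrite hsize_heap_of in sz.
by have := glue_based_pyramid sp (conj pyr bot); rewrite sz.
Qed.

Lemma based_pyramid_alternating b m H : based_pyramid b m H ->
  exists ps, [/\ ps != [::], alternating b ps, sumn (map hsize ps) = m &
                 heap_of (stack_word ps) = H].
Proof.
elim/ltn_ind: m b H => m IH b H based.
have [on_sideH|/allPn [y yH y_off]] := boolP (all (fun y => on_side b y.1) (enum_fset H)).
  case: based => pyr bot sz; exists [:: H]; split=> //.
  - by move=> [|i] // _; rewrite addbF; split=> // y yH; apply: (allP on_sideH).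
  - by rewrite /= addn0.
  - by rewrite /stack_word /= cats0 heap_of_canon //; case: pyr.
have [P [w [sideP pyr_w sz eH]]] := based_pyramid_split based (ex_intro2 _ _ y yH y_off).
have lt_wm : size w < m.
  rewrite -sz -addn1 addnC leq_add2r cardfs_gt0; apply/fset0Pn.
  by case: sideP => _ bot _; exists (base_pos b, 0%N).
have based_w : based_pyramid (~~ b) (size w) (heap_of w).
  by case: pyr_w; split; rewrite ?hsize_heap_of.
have [ps [ps0 alt sum_ps e_ps]] := IH _ lt_wm (~~ b) _ based_w.
exists (P :: ps); split=> //.
- by apply/alternating_cons.
- by rewrite /= sum_ps -sz.
- by rewrite /stack_word /= -eH; apply: heap_of_cat2l.
Qed.

Lemma side_pyramid_neq_glue b P Q w : side_pyramid b P -> side_pyramid b Q ->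
  pyramid_word (base_pos (~~ b)) w ->
  P <> heap_of (canon Q ++ w).
Proof.
move=> [_ _ onP] sideQ pyr_w ePQ; have [xH x_off] := glue_head sideQ pyr_w.
by move: xH; rewrite -ePQ => /onP; apply/negP.
Qed.

Lemma alternating_inj b ps1 ps2 : ps1 != [::] -> ps2 != [::] ->
  alternating b ps1 -> alternating b ps2 ->
  heap_of (stack_word ps1) = heap_of (stack_word ps2) -> ps1 = ps2.
Proof.
elim: ps1 b ps2 => [|p1 r1 IH] b [|p2 r2] // _ _.
move=> /alternating_cons [s1 alt1] /alternating_cons [s2 alt2].
have pyr_of q r :
    alternating (~~ b) (q :: r) -> pyramid_word (base_pos (~~ b)) (stack_word (q :: r)).
  by move=> alt; have [] := alternating_based_pyramid (ps := q :: r) isT alt.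
rewrite /stack_word /=.
case: r1 => [|q1 r1] in IH alt1 *; case: r2 => [|q2 r2] in alt2 *; rewrite ?cats0.
- by rewrite (side_pyramid_heap s1) (side_pyramid_heap s2) => ->.
- by rewrite (side_pyramid_heap s1) => /(side_pyramid_neq_glue s1 s2 (pyr_of _ _ alt2)).
- by rewrite (side_pyramid_heap s2) => /esym /(side_pyramid_neq_glue s2 s1 (pyr_of _ _ alt1)).
move/(glue_inj s1 s2 (pyr_of _ _ alt1) (pyr_of _ _ alt2)) => [-> e'].
by rewrite (IH _ (q2 :: r2) isT isT alt1 alt2 e').
Qed.

Lemma inverse_of_bijection (A B : Type) (b0 : B) (PA : A -> Prop) (PB : B -> Prop)
    (g : B -> A) :
  (forall y, PB y -> PA (g y)) ->
  (forall y1 y2, PB y1 -> PB y2 -> g y1 = g y2 -> y1 = y2) ->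
  (forall x, PA x -> exists y, PB y /\ g y = x) ->
  exists f : A -> B,
    (forall x, PA x -> PB (f x)) /\
    (forall x1 x2, PA x1 -> PA x2 -> f x1 = f x2 -> x1 = x2) /\
    (forall y, PB y -> exists x, PA x /\ f x = y).
Proof.
move=> gP g_inj g_surj.
pose f x := epsilon (inhabits b0) (fun y => PB y /\ g y = x).
have fP x : PA x -> PB (f x) /\ g (f x) = x by move/g_surj; apply: epsilon_spec.
exists f; split; [|split].
- by move=> x /fP [].
- by move=> x1 x2 /fP [_ e1] /fP [_ e2] e; rewrite -e1 -e2 e.
- move=> y hy; exists (g y); split; first exact: gP.
  by have [fgyB fgy] := fP _ (gP _ hy); apply: g_inj fgyB hy fgy.
Qed.

Lemma good_seq_alternating m ps :
  good_seq m ps <-> [/\ ps != [::], alternating true ps & sumn (map hsize ps) = m].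
Proof.
have sideE i : side_pyramid (true (+) odd i) (nth fset0 ps i) <->
    if odd i.+1 then right_pyramid 0 (nth fset0 ps i) else left_pyramid 1 (nth fset0 ps i).
  rewrite /= /right_pyramid /left_pyramid /side_pyramid /on_side /base_pos /a.
  have -> : (1 - 2 : int)%R = (-1)%R by [].
  case: (odd i) => /=; split=> [[pyr bot side]|[pyr [bot side]]]; do ?split=> //;
    by move=> x /side; lia.
rewrite /good_seq -size_eq0 -lt0n.
split=> [[s0 [alt sum]]|[s0 alt sum]].
  by split=> // i hi; apply/sideE/alt.
by split=> //; split=> // i hi; apply/sideE/alt.
Qed.

Theorem lemma1 (m : nat) (hm : (1 <= m)%N) :
  exists f : {fset placed} -> seq {fset placed},
    (forall H, pyr0 m H -> good_seq m (f H)) /\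
    (forall H1 H2, pyr0 m H1 -> pyr0 m H2 -> f H1 = f H2 -> H1 = H2) /\
    (forall ps, good_seq m ps -> exists H, pyr0 m H /\ f H = ps).
Proof.
have pyr0_based H : pyr0 m H <-> based_pyramid true m H.
  by split=> [[? [? ?]]|[? ? ?]].
apply: (inverse_of_bijection [::] (g := fun ps => heap_of (stack_word ps))).
- move=> ps /good_seq_alternating [ps0 alt sum]; apply/pyr0_based; rewrite -sum.
  exact: alternating_based_pyramid.
- move=> ps1 ps2 /good_seq_alternating [ps1_0 alt1 _] /good_seq_alternating [ps2_0 alt2 _].
  exact: (alternating_inj ps1_0 ps2_0 alt1 alt2).
- move=> H /pyr0_based /based_pyramid_alternating [ps [ps0 alt sum eH]].
  by exists ps; split; first exact/good_seq_alternating.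
Qed.
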